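(* Let $Y$ be a finite connected simple undirected graph with a cycle-edge $e=\{v,w\}$, and let $O\in\mathsf{Acyc}(Y)$ with $v\leq_O w$. Let $\mathbf{c}=c_1c_2\cdots c_m$ be a click-sequence for $O$ containing precisely one occurrence of $w$ and such that no vertex of $\mathcal{I}(O)$ occurs in $\mathbf{c}$ after that occurrence of $w$. Then there exists a click-sequence $\mathbf{c}'=c'_1c'_2\cdots c'_m$ for $O$ such that (i) there is an interval $[p,q]$ of integers with $c'_j\in\mathcal{I}(O)$ if and only if $p\leq j\leq q$, and (ii) $\mathbf{c}(O)=\mathbf{c}'(O)$.
   Context: $\mathsf{Acyc}(Y)$ is the set of acyclic orientations; $i\leq_O j$ iff there is a directed path from $i$ to $j$ in $O$. $\mathcal{I}(O)=\{a: v\leq_O a\leq_O w\}$ when $v\leq_O w$. A click at a vertex $x$ which is a source reverses all edges incident to $x$. A click-sequence for $O$ is a sequence of vertices $c_1,\dots,c_m$ such that for each $i$, $c_i$ is a source of the orientation obtained from $O$ by successively clicking $c_1,\dots,c_{i-1}$; $\mathbf{c}(O)$ denotes the resulting orientation after all $m$ clicks. *)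

From mathcomp Require Import all_boot.
Set Implicit Arguments. Unset Strict Implicit. Unset Printing Implicit Defensive.

Definition simple_graph (T : finType) (Y : rel T) : Prop :=
  symmetric Y /\ irreflexive Y.

Definition connected_graph (T : finType) (Y : rel T) : Prop :=
  forall x y : T, connect Y x y.

Definition cycle_edge (T : finType) (Y : rel T) (v w : T) : Prop :=
  Y v w /\
  exists p : seq T,
    [/\ 0 < size p, uniq (v :: w :: p), path Y w p & Y (last w p) v].

(* An orientation of Y: a relation o with o x y meaning the edge {x,y} is
   oriented x -> y; every edge gets exactly one direction, non-edges none. *)
Definition orientation (T : finType) (Y : rel T) (o : rel T) : Prop :=
  (forall x y, o x y -> Y x y) /\
  (forall x y, Y x y -> o x y (+) o y x).

Definition acyclic (T : finType) (o : rel T) : Prop :=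
  forall x y, o x y -> ~~ connect o y x.

Definition is_acyc (T : finType) (Y : rel T) (o : rel T) : Prop :=
  orientation Y o /\ acyclic o.

Definition leO (T : finType) (o : rel T) (i j : T) : bool := connect o i j.

Definition interval (T : finType) (o : rel T) (v w : T) : pred T :=
  fun a => leO o v a && leO o a w.

Definition is_source (T : finType) (o : rel T) (x : T) : bool :=
  [forall y, ~~ o y x].

Definition click (T : finType) (o : rel T) (x : T) : rel T :=
  fun a b => if (a == x) || (b == x) then o b a else o a b.

Fixpoint click_seq_valid (T : finType) (o : rel T) (c : seq T) : bool :=
  if c is x :: c' then is_source o x && click_seq_valid (click o x) c'
  else true.

Definition click_result (T : finType) (o : rel T) (c : seq T) : rel T :=
  foldl (@click T) o c.

From mathcomp Require Import all_boot zify.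
Set Implicit Arguments. Unset Strict Implicit. Unset Printing Implicit Defensive.

(* Only the number of times each vertex is clicked matters for c(O): an edge
   is reversed iff its endpoints were clicked an odd number of times in total.
   A sequence is a click-sequence iff, after each of its prefixes and along each
   edge x -> y of O, x has been clicked as often as y or once more.  Since w is
   clicked once and the vertices of I(O) lie between v and w, each of them is
   clicked exactly once.  The new sequence first clicks once every vertex below
   w occurring in c -- those outside I(O) first, then those of I(O), each group
   in the order of their first clicks in c -- and then the remaining clicks of c
   in their original order.  It is a permutation of c; its prefixes inside the
   first part click down-closed sets, and later ones have the counts of a prefix
   of c raised to at least 1 below w, a maximum of two admissible count vectors. *)


Section Clicks.
Variable T : finType.

Lemma click_eq (o1 o2 : rel T) x : o1 =2 o2 -> click o1 x =2 click o2 x.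
Proof. by move=> E a b; rewrite /click !E. Qed.

Lemma click_seq_valid_eq (o1 o2 : rel T) s :
  o1 =2 o2 -> click_seq_valid o1 s = click_seq_valid o2 s.
Proof.
elim: s o1 o2 => [|x s IH] o1 o2 E //=.
rewrite (IH _ (click o2 x)); last exact: click_eq.
by congr (_ && _); apply: eq_forallb => y; rewrite E.
Qed.

Definition clicks_from (n : T -> nat) (s : seq T) : T -> nat :=
  fun u => n u + count_mem u s.

Lemma clicks_from_cat n s1 s2 :
  clicks_from n (s1 ++ s2) =1 clicks_from (clicks_from n s1) s2.
Proof. by move=> u; rewrite /clicks_from count_cat addnA. Qed.

Variable o : rel T.

(* The orientation reached from [o] by clicking each vertex [u] exactly [n u]
   times, in any valid order. *)
Definition flipped (n : T -> nat) : rel T :=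
  fun a b => if odd (n a + n b) then o b a else o a b.

(* The counts of valid click-sequences (click_seq_validP): a vertex is a source
   exactly when it has caught up with all of its original in-neighbours. *)
Definition admissible (n : T -> nat) : Prop :=
  forall x y, o x y -> n y <= n x <= (n y).+1.

Lemma flipped_eq n1 n2 : n1 =1 n2 -> flipped n1 =2 flipped n2.
Proof. by move=> E a b; rewrite /flipped !E. Qed.

Lemma admissible_eq n1 n2 : n1 =1 n2 -> admissible n1 -> admissible n2.
Proof. by move=> E H x y /H; rewrite !E. Qed.

Lemma click_flipped n x : click (flipped n) x =2 flipped (clicks_from n [:: x]).
Proof.
move=> a b; rewrite /click /flipped /clicks_from /=.
case: (eqVneq a x) => [->|ax]; case: (eqVneq b x) => [->|bx] /=;
  rewrite ?eqxx ?(eq_sym x a) ?(eq_sym x b) ?(negbTE ax) ?(negbTE bx) /= ?addn0.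
- by case: odd; case: odd.
- have -> : odd (n x + 1 + n b) = ~~ odd (n b + n x) by lia.
  by case: odd.
- have -> : odd (n a + (n x + 1)) = ~~ odd (n x + n a) by lia.
  by case: odd.
- done.
Qed.

Lemma foldl_click_flipped s n (o' : rel T) :
  o' =2 flipped n -> foldl (@click T) o' s =2 flipped (clicks_from n s).
Proof.
elim: s n o' => [|x s IH] n o' E /=.
  by move=> a b; rewrite E; apply: flipped_eq => u; rewrite /clicks_from addn0.
move=> a b; rewrite (IH (clicks_from n [:: x])); last first.
  by move=> a' b'; rewrite (click_eq x E) click_flipped.
by apply: flipped_eq => u; rewrite -clicks_from_cat.
Qed.

Lemma click_result_perm s1 s2 :
  perm_eq s1 s2 -> click_result o s1 =2 click_result o s2.
Proof.
move=> s12 a b; rewrite /click_result.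
rewrite !(@foldl_click_flipped _ (fun=> 0)) //.
by apply: flipped_eq => u; rewrite /clicks_from (permP s12).
Qed.

Lemma admissible_maxn n m :
  admissible n -> admissible m -> admissible (fun u => maxn (n u) (m u)).
Proof. by move=> hn hm x y oxy; have := hn x y oxy; have := hm x y oxy; lia. Qed.

Lemma admissible_connect n x y : admissible n -> connect o x y -> n y <= n x.
Proof.
move=> adm /connectP [p o_p ->].
elim: p x o_p => [|z p IH] x //= /andP [oxz o_p].
by have := IH _ o_p; have := adm _ _ oxz; lia.
Qed.

Lemma admissible_closed (s : seq T) :
  uniq s -> (forall x y, o x y -> y \in s -> x \in s) ->
  admissible (clicks_from (fun=> 0) s).
Proof.
move=> s_uniq s_closed x y oxy; rewrite /clicks_from !add0n !count_uniq_mem //.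
by have := s_closed x y oxy; case: (y \in s); case: (x \in s) => // /(_ isT).
Qed.

Hypothesis o_asym : forall a b, o a b -> ~~ o b a.

Lemma source_flipped n x : admissible n ->
  is_source (flipped n) x <-> admissible (clicks_from n [:: x]).
Proof.
rewrite /flipped /clicks_from => adm; split.
  move=> /forallP src a b oab; have := adm a b oab; rewrite /= !addn0.
  have nba := o_asym oab.
  case: (eqVneq x a) => [xa|xa]; case: (eqVneq x b) => [xb|xb] /=.
  - by subst; rewrite oab in nba.
  - by subst; have := src b; rewrite oab (negbTE nba); case: ifP => // h _; lia.
  - by subst; have := src a; rewrite oab (negbTE nba); case: ifP => // h _; lia.
  - lia.
move=> adm1; apply/forallP => y.
case: (eqVneq y x) => [->|yx].
  by rewrite addnn odd_double; apply/negP => oxx; have := o_asym oxx; rewrite oxx.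
have := adm1 x y; have := adm1 y x; have := adm x y; have := adm y x.
rewrite /= !addn0 eqxx (eq_sym x y) (negbTE yx) /=.
case oxy: (o x y); case oyx: (o y x) => //=.
- by have := o_asym oxy; rewrite oyx.
- by move=> _ /(_ isT) h1 _ /(_ isT) h2; have -> : odd (n y + n x) = false by lia.
- by move=> /(_ isT) h1 _ /(_ isT) h2 _; have -> : odd (n y + n x) by lia.
- by case: ifP.
Qed.

Lemma click_seq_valid_flipped s n : admissible n ->
  click_seq_valid (flipped n) s <->
  forall t, t <= size s -> admissible (clicks_from n (take t s)).
Proof.
elim: s n => [|x s IH] n adm /=.
  by split=> // _ t _; apply: admissible_eq adm => u; rewrite /clicks_from addn0.
have take0E t : admissible (clicks_from n (take t.+1 (x :: s))) <->
                admissible (clicks_from (clicks_from n [:: x]) (take t s)).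
  by split; apply: admissible_eq => u; rewrite -clicks_from_cat.
rewrite (click_seq_valid_eq _ (click_flipped n x)); split.
  case/andP => /(source_flipped _ adm) adm1 /(IH _ adm1) valid [_|t] /=.
    by apply: admissible_eq adm => u; rewrite /clicks_from addn0.
  by rewrite ltnS => /valid /take0E.
move=> valid.
have adm1 : admissible (clicks_from n [:: x]).
  by apply: admissible_eq (valid 1 isT) => u; rewrite /= take0.
apply/andP; split; first exact/source_flipped.
by apply/(IH _ adm1) => t ts; apply/take0E/valid.
Qed.

Lemma click_seq_validP s :
  click_seq_valid o s <->
  forall t, t <= size s -> admissible (clicks_from (fun=> 0) (take t s)).
Proof.
rewrite (@click_seq_valid_eq _ (flipped (fun=> 0))) //.
exact: click_seq_valid_flipped.
Qed.

Lemma click_seq_index_lt c x y :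
  click_seq_valid o c -> o x y -> y \in c -> index x c < index y c.
Proof.
move=> /click_seq_validP valid oxy yc.
have t_le : (index y c).+1 <= size c by rewrite index_mem.
have := valid _ t_le x y oxy; rewrite /clicks_from !add0n => /andP [y_le_x _].
have y_take : 0 < count_mem y (take (index y c).+1 c).
  by rewrite -has_count has_pred1 in_take // ltnSn.
have x_take : x \in take (index y c).+1 c.
  by rewrite -has_pred1 has_count (leq_trans y_take).
have := index_ltn x_take; rewrite ltnS leq_eqVlt => /orP [/eqP same|//].
have xc := mem_take x_take.
have xy : x = y by rewrite -(nth_index x xc) same nth_index.
by move: oxy (o_asym oxy); rewrite xy => ->.
Qed.

End Clicks.

Lemma mem_take_sorted (T : eqType) (f : T -> nat) (s : seq T) t x y :
  sorted (relpre f leq) s -> x \in s -> f x < f y ->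
  y \in take t s -> x \in take t s.
Proof.
move=> s_sorted xs fxy yt; have ys := mem_take yt.
have f_trans : transitive (relpre f leq) by move=> ? ? ?; apply: leq_trans.
rewrite in_take // (leq_ltn_trans _ (index_ltn yt)) // leqNgt.
apply/negP => /ltnW /(sorted_leq_index f_trans (fun=> leqnn _) s_sorted _ _ ys xs).
by rewrite /= leqNgt fxy.
Qed.

Section DropFirstClicks.
Variables (T : finType) (W : pred T).

(* [n] counts the clicks made before [s]; every vertex of [W] not clicked yet
   loses its first click in [s]. *)
Fixpoint drop_first_clicks (n : T -> nat) (s : seq T) : seq T :=
  if s is x :: s' then
    let rest := drop_first_clicks (clicks_from n [:: x]) s' in
    if W x && (n x == 0) then rest else x :: rest
  else [::].

Lemma count_drop_first_clicks n s u :
  count_mem u (drop_first_clicks n s) + [&& W u, n u == 0 & u \in s] =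
  count_mem u s.
Proof.
elim: s n => [|x s IH] n /=; first by rewrite !andbF.
rewrite in_cons; have := IH (clicks_from n [:: x]); rewrite /clicks_from /=.
case: (eqVneq x u) => [<-|xu]; rewrite /= ?eqxx ?(eq_sym u x) ?(negbTE xu) /=;
  case: (W x); case: (n x == 0) => /=; rewrite ?eqxx ?(negbTE xu) /=; lia.
Qed.

Lemma drop_first_clicks_take n s t' :
  t' <= size (drop_first_clicks n s) ->
  exists2 t, t <= size s &
    clicks_from (fun u => maxn (n u) (W u)) (take t' (drop_first_clicks n s)) =1
    (fun u => maxn (clicks_from n (take t s) u) (W u)).
Proof.
elim: s n t' => [|x s IH] n t' /=.
  by move=> _; exists 0 => // u; rewrite /clicks_from /=; lia.
case: ifP => first_x.
  move=> /(IH (clicks_from n [:: x])) [t ts E]; exists t.+1 => // u.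
  have := E u; rewrite /clicks_from /=; move: first_x => /andP [Wx /eqP nx].
  by case: (eqVneq x u) => [<-|xu] /=; rewrite ?Wx; lia.
case: t' => [|t'] /=.
  by move=> _; exists 0 => // u; rewrite /clicks_from /=; lia.
move=> /(IH (clicks_from n [:: x])) [t ts E]; exists t.+1 => // u.
have := E u; rewrite /clicks_from /=.
case: (eqVneq x u) => [<-|xu] /=; last lia.
by move: first_x; case: (W x) => /= [/negbT|]; lia.
Qed.

End DropFirstClicks.

Lemma count_mem_sort_enum (T : finType) (r : rel T) (P : pred T) u :
  count_mem u (sort r [seq x <- enum T | P x]) = P u.
Proof.
rewrite (permP (permEl (perm_sort r _))) count_uniq_mem.
  by rewrite mem_filter mem_enum andbT.
exact/filter_uniq/enum_uniq.
Qed.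

Section Reordering.
Variables (T : finType) (o : rel T) (v w : T) (c : seq T).
Hypotheses (o_asym : forall a b, o a b -> ~~ o b a) (o_vw : o v w).
Hypotheses (c_valid : click_seq_valid o c) (count_w : count_mem w c = 1).
Hypothesis interval_not_after_w :
  forall j, index w c < j < size c -> nth v c j \notin interval o v w.

Local Notation I := (interval o v w).
Local Notation counts s := (clicks_from (fun=> 0) s).

Lemma interval_prefix_counts a t : a \in I -> t <= size c ->
  counts (take t c) w <= counts (take t c) a <= (counts (take t c) w).+1.
Proof.
case/andP=> va aw /(click_seq_validP o_asym c).1 - /(_ c_valid) adm.
have := admissible_connect adm aw; have := admissible_connect adm va.
by have := adm _ _ o_vw; lia.
Qed.

Lemma count_interval a : a \in I -> count_mem a c = 1.
Proof.
move=> Ia; have := interval_prefix_counts Ia (leqnn (size c)).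
rewrite take_size /clicks_from !add0n count_w.
case: (eqVneq a w) => [-> //|a_neq_w] once_or_twice.
have wc : w \in c by rewrite -has_pred1 has_count count_w.
have k_lt : index w c < size c by rewrite index_mem.
have no_w_before : count_mem w (take (index w c) c) = 0.
  by apply/count_memPn/negP => /index_ltn; rewrite ltnn.
have no_a_after : count_mem a (drop (index w c).+1 c) = 0.
  apply/count_memPn/negP => a_after.
  have a_idx : index a (drop (index w c).+1 c) < size c - (index w c).+1.
    by rewrite -size_drop index_mem.
  have j_lt : index w c < (index w c).+1 + index a (drop (index w c).+1 c) < size c.
    by lia.
  by have := interval_not_after_w j_lt; rewrite -nth_drop nth_index // Ia.
have count_before_w : count_mem a c = count_mem a (take (index w c) c).
  rewrite -[in LHS](cat_take_drop (index w c) c) count_cat (drop_nth v k_lt) /=.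
  by rewrite nth_index // no_a_after eq_sym (negbTE a_neq_w) !addn0.
have := interval_prefix_counts Ia (ltnW k_lt).
by rewrite /clicks_from !add0n no_w_before -count_before_w; lia.
Qed.

Definition below_w : pred T := fun u => (u \in c) && leO o u w.

Local Notation first_click := (relpre (index^~ c) leq).

Definition outside_block : seq T :=
  sort first_click [seq u <- enum T | below_w u && (u \notin I)].

Definition interval_block : seq T :=
  sort first_click [seq u <- enum T | below_w u && (u \in I)].

Definition lower_block : seq T := outside_block ++ interval_block.

Local Notation rest := (drop_first_clicks below_w (fun=> 0) c).

Definition reordered : seq T := lower_block ++ rest.

Lemma mem_outside_block u : (u \in outside_block) = below_w u && (u \notin I).
Proof. by rewrite mem_sort mem_filter mem_enum andbT. Qed.

Lemma mem_interval_block u : (u \in interval_block) = below_w u && (u \in I).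
Proof. by rewrite mem_sort mem_filter mem_enum andbT. Qed.

Lemma count_lower_block u : count_mem u lower_block = below_w u.
Proof.
by rewrite count_cat !count_mem_sort_enum; case: below_w; case: (u \in I).
Qed.

Lemma uniq_lower_block : uniq lower_block.
Proof.
apply: count_mem_uniq => u; rewrite count_lower_block mem_cat.
by rewrite mem_outside_block mem_interval_block; case: below_w; case: (u \in I).
Qed.

Lemma below_w_edge x y :
  o x y -> below_w y -> below_w x && (index x c < index y c).
Proof.
move=> oxy /andP [yc yw].
have lt := click_seq_index_lt o_asym c_valid oxy yc.
rewrite /below_w -index_mem (ltn_trans lt) ?index_mem // lt andbT /=.
exact: connect_trans (connect1 oxy) yw.
Qed.

Lemma interval_edge x y : o x y -> x \in I -> leO o y w -> y \in I.
Proof.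
move=> oxy /andP [vx _] yw; apply/andP; split=> //.
exact: connect_trans vx (connect1 oxy).
Qed.

Lemma mem_take_lower_block t x y :
  o x y -> y \in take t lower_block -> x \in take t lower_block.
Proof.
move=> oxy yt.
have Wy : below_w y.
  have := count_lower_block y.
  by rewrite count_uniq_mem ?uniq_lower_block ?(mem_take yt); case: below_w.
have /andP [Wx lt] := below_w_edge oxy Wy.
have Iy_of_Ix : x \in I -> y \in I.
  by move=> Ix; apply: interval_edge oxy Ix _; case/andP: Wy.
have sorted_block P : sorted first_click (sort first_click [seq u <- enum T | P u]).
  by apply: sort_sorted => a b; apply: leq_total.
have outside_x : y \in outside_block -> x \in outside_block.
  rewrite !mem_outside_block Wx Wy /=; apply: contra; exact: Iy_of_Ix.
rewrite /lower_block take_cat in yt *; case: ltnP => t_le in yt *.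
  exact: mem_take_sorted (sorted_block _) (outside_x (mem_take yt)) lt yt.
rewrite mem_cat; rewrite mem_cat in yt; case/orP: yt => [/outside_x -> // | yt].
case Ix: (x \in I); last by rewrite mem_outside_block Wx Ix.
have x_in : x \in interval_block by rewrite mem_interval_block Wx Ix.
by rewrite (mem_take_sorted (sorted_block _) x_in lt yt) orbT.
Qed.

Lemma count_rest u : count_mem u rest + below_w u = count_mem u c.
Proof.
rewrite -(count_drop_first_clicks below_w (fun=> 0) c u) /=.
by rewrite [in RHS]andbAC andbb.
Qed.

Lemma rest_not_interval a : a \in rest -> a \notin I.
Proof.
move=> a_rest; apply/negP => Ia.
have Wa : below_w a.
  by rewrite /below_w -has_pred1 has_count count_interval //; case/andP: Ia.
have := count_rest a; rewrite Wa count_interval //.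
by rewrite -has_pred1 has_count in a_rest; lia.
Qed.

Lemma perm_reordered : perm_eq reordered c.
Proof.
apply/allP => u _; apply/eqP.
by rewrite count_cat count_lower_block -(count_rest u) addnC.
Qed.

Lemma reordered_valid : click_seq_valid o reordered.
Proof.
have c_adm := (click_seq_validP o_asym c).1 c_valid.
apply/(click_seq_validP o_asym) => t t_le.
case: (leqP t (size lower_block)) => [t_le_block|t_gt_block].
  rewrite /reordered takel_cat //.
  by apply/admissible_closed/mem_take_lower_block; rewrite take_uniq ?uniq_lower_block.
have below_w_adm : admissible o below_w.
  apply: admissible_eq (admissible_closed uniq_lower_block _) => [u|x y].
    by rewrite /clicks_from count_lower_block.
  by have := @mem_take_lower_block (size lower_block) x y; rewrite take_size.
have -> : take t reordered = lower_block ++ take (t - size lower_block) rest.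
  by rewrite /reordered take_cat ltnNge (ltnW t_gt_block).
have : t - size lower_block <= size rest.
  by move: t_le; rewrite /reordered size_cat; lia.
case/drop_first_clicks_take => t0 /c_adm t0_adm E.
apply: admissible_eq (admissible_maxn t0_adm below_w_adm) => u.
by rewrite clicks_from_cat -E /clicks_from count_lower_block max0n.
Qed.

Lemma reordered_interval :
  exists p q, forall j, j < size reordered ->
    (nth v reordered j \in I) = (p <= j <= q).
Proof.
have w_block : w \in interval_block.
  rewrite mem_interval_block; apply/andP; split; apply/andP; split.
  - by rewrite -has_pred1 has_count count_w.
  - exact: connect0.
  - exact: connect1.
  - exact: connect0.
have block_nonempty : 0 < size interval_block by case: interval_block w_block.
exists (size outside_block), (size lower_block).-1 => j j_lt.
rewrite /reordered nth_cat; case: ltnP => j_block.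
  rewrite /lower_block nth_cat; case: ltnP => j_out.
    have := mem_nth v j_out; rewrite mem_outside_block => /andP [_ /negbTE ->].
    by lia.
  have j_in : j - size outside_block < size interval_block.
    by move: j_block; rewrite size_cat; lia.
  have := mem_nth v j_in; rewrite mem_interval_block => /andP [_ ->].
  by move: j_block; rewrite size_cat; lia.
have j_rest : j - size lower_block < size rest.
  by move: j_lt; rewrite size_cat; lia.
rewrite (negbTE (rest_not_interval (mem_nth v j_rest))).
by move: j_block; rewrite /lower_block size_cat; lia.
Qed.

End Reordering.

Lemma acyc_asym (T : finType) (Y o : rel T) :
  is_acyc Y o -> forall a b, o a b -> ~~ o b a.
Proof.
move=> [[oY oYx] _] a b oab.
by have := oYx a b (oY a b oab); rewrite oab.
Qed.

Lemma acyc_edge_oriented (T : finType) (Y o : rel T) v w :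
  is_acyc Y o -> Y v w -> leO o v w -> o v w.
Proof.
move=> [[_ oYx] o_acyc] Yvw le_vw.
have := oYx v w Yvw; case: (o v w) => //= owv.
by have := o_acyc _ _ owv; rewrite /leO in le_vw; rewrite le_vw.
Qed.

Theorem proposition8 (T : finType) (Y : rel T) (v w : T) (o : rel T)
  (c : seq T) :
  simple_graph Y -> connected_graph Y -> cycle_edge Y v w ->
  is_acyc Y o -> leO o v w ->
  click_seq_valid o c ->
  count_mem w c = 1 ->
  (forall j, index w c < j < size c -> nth v c j \notin interval o v w) ->
  exists c' : seq T,
    [/\ size c' = size c,
        click_seq_valid o c',
        (exists p q : nat, forall j, j < size c' ->
            (nth v c' j \in interval o v w) = (p <= j <= q))
      & click_result o c =2 click_result o c'].
Proof.
move=> _ _ [Yvw _] o_acyc le_vw c_valid count_w interval_not_after_w.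
have o_asym := acyc_asym o_acyc.
have o_vw := acyc_edge_oriented o_acyc Yvw le_vw.
have perm_c := perm_reordered o v w c.
exists (reordered o v w c); split.
- exact: perm_size perm_c.
- exact: reordered_valid.
- exact: reordered_interval.
- by apply: click_result_perm; rewrite perm_sym.
Qed.
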